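(* Let $Q$ be a quiver with at least one end and $W$ a nonzero complex vector space. Then the set $\mathcal{R}^{ss}_W(Q)$ of semisimple representations is not dense in $\mathcal{R}_W(Q)$.
   Context: A quiver $Q=(Q_V,Q_A)$ is a finite directed graph; each arrow $a$ has head $h_a$ and tail $t_a$. A vertex is a sink if no arrow has it as tail, a source if no arrow has it as head; an end is a sink or a source. $\mathcal{R}_W(Q)=\bigoplus_{a\in Q_A}\mathrm{End}(W)$ is the space of (additive) quiver representations in $W$, with $G_W(Q)=\mathsf{GL}(W)^{Q_V}$ acting by $(g\cdot x)(a)=g_{h_a}x(a)g_{t_a}^{-1}$. A representation is semisimple if it is a direct sum of simple representations (those without proper nonzero subrepresentations); equivalently its $G_W(Q)$-orbit is closed. *)

From HB Require Import structures.
From mathcomp Require Import all_boot all_order all_algebra.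
Set Implicit Arguments. Unset Strict Implicit. Unset Printing Implicit Defensive.
Import Order.TTheory GRing.Theory Num.Theory.
Local Open Scope ring_scope.

(* W = C^n (column vectors); a representation x assigns to each arrow a an
   n x n matrix x a : W_(t a) -> W_(h a) acting on column vectors. *)

Definition is_sink (V A : finType) (h t : A -> V) (v : V) : bool :=
  [forall a, t a != v].
Definition is_source (V A : finType) (h t : A -> V) (v : V) : bool :=
  [forall a, h a != v].
Definition is_end (V A : finType) (h t : A -> V) (v : V) : bool :=
  is_sink h t v || is_source h t v.
Definition incident (V A : finType) (h t : A -> V) (v : V) : bool :=
  [exists a, (h a == v) || (t a == v)].

(* A subrepresentation of x: a family of subspaces U v of C^n (given as row
   spaces of matrices; a column vector w lies in U v iff w^T is in the row
   space) with x(a) U_(t a) <= U_(h a). *)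
Definition subrep (C : fieldType) (n : nat) (V A : finType) (h t : A -> V)
    (x : A -> 'M[C]_n) (U : V -> 'M[C]_n) : Prop :=
  forall a, (U (t a) *m (x a)^T <= U (h a))%MS.

Definition subrep_le (C : fieldType) (n : nat) (V : finType)
    (U1 U2 : V -> 'M[C]_n) : Prop := forall v, (U1 v <= U2 v)%MS.

Definition subrep_zero (C : fieldType) (n : nat) (V : finType)
    (U : V -> 'M[C]_n) : Prop := forall v, U v = 0.

Definition simple_subrep (C : fieldType) (n : nat) (V A : finType)
    (h t : A -> V) (x : A -> 'M[C]_n) (U : V -> 'M[C]_n) : Prop :=
  [/\ subrep h t x U, ~ subrep_zero U &
      forall U', subrep h t x U' -> subrep_le U' U ->
        subrep_zero U' \/ subrep_le U U'].

Definition semisimple (C : fieldType) (n : nat) (V A : finType)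
    (h t : A -> V) (x : A -> 'M[C]_n) : Prop :=
  exists (k : nat) (Us : 'I_k -> V -> 'M[C]_n),
    (forall i, simple_subrep h t x (Us i)) /\
    (forall v, mxdirect (\sum_i Us i v)%MS /\ ((\sum_i Us i v)%MS == 1%:M)%MS).

Inductive polyfun (C : fieldType) (n : nat) (A : finType)
    : ((A -> 'M[C]_n) -> C) -> Prop :=
| pf_const (c : C) : polyfun (fun _ => c)
| pf_coord (a : A) (i j : 'I_n) : polyfun (fun x => x a i j)
| pf_add f g : polyfun f -> polyfun g -> polyfun (fun x => f x + g x)
| pf_mul f g : polyfun f -> polyfun g -> polyfun (fun x => f x * g x).

Definition zariski_dense (C : fieldType) (n : nat) (A : finType)
    (S : (A -> 'M[C]_n) -> Prop) : Prop :=
  forall f, polyfun f -> (forall x, S x -> f x = 0) -> forall x, f x = 0.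

From HB Require Import structures.
From mathcomp Require Import all_boot all_order all_algebra.
Local Open Scope ring_scope.

(* Fix an arrow a0 incident to an end v of Q.
   - For a subrepresentation U, restricting U to a sink v, or deleting the
     component of U at a source v, again yields a subrepresentation contained
     in U.  Applied to a simple U this forces U to vanish at one of the two
     endpoints of a0 (the part "on the v side" or the part "off v" is zero).
   - A simple summand vanishing at an endpoint of a0 is annihilated by x(a0).
     In a semisimple representation W_(t a0) is the sum of these summands, so
     x(a0) = 0 for every semisimple x.
   - Hence the coordinate function x |-> x(a0)_(0,0) is a polynomial function
     vanishing on all semisimple representations, but not on the
     representation with all arrows acting by the identity; so the semisimple
     locus is not Zariski dense. *)

Section SimpleAtEnds.

Variables (C : fieldType) (n : nat) (V A : finType) (h t : A -> V).
Variable x : A -> 'M[C]_n.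

(* The part of a subrepresentation sitting at a sink is a subrepresentation:
   no arrow leaves a sink, so there is nothing to check. *)
Lemma sink_part_subrep (U : V -> 'M[C]_n) (v : V) :
  is_sink h t v ->
  subrep h t x (fun w => if w == v then U v else 0).
Proof.
by move=> /forallP sink_v a; rewrite (negbTE (sink_v a)) mul0mx sub0mx.
Qed.

(* Deleting the component at a source keeps a subrepresentation: no arrow
   enters a source, and arrows out of it now start from 0. *)
Lemma delete_source_subrep (U : V -> 'M[C]_n) (v : V) :
  is_source h t v -> subrep h t x U ->
  subrep h t x (fun w => if w == v then 0 else U w).
Proof.
move=> /forallP source_v subU a; rewrite (negbTE (source_v a)).
by case: eqP => _; rewrite ?mul0mx ?sub0mx ?subU.
Qed.

Lemma simple_vanishes_near_end (U : V -> 'M[C]_n) (v : V) (a : A) :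
  simple_subrep h t x U -> is_end h t v -> (h a == v) || (t a == v) ->
  U (t a) = 0 \/ U (h a) = 0.
Proof.
move=> [subU _ minU] /orP[sink_v | source_v] inc_a.
- have head_a : h a = v.
    by case/orP: inc_a => /eqP // tav; move/forallP/(_ a): sink_v; rewrite tav eqxx.
  have tail_a : t a != v by move/forallP: sink_v.
  have le_U : subrep_le (fun w => if w == v then U v else 0) U.
    by move=> w; case: eqP => [->|_]; rewrite ?submx_refl ?sub0mx.
  case: (minU _ (sink_part_subrep U v sink_v) le_U) => [zero_v | ge_U].
  + by right; rewrite head_a; move: (zero_v v); rewrite eqxx.
  + by left; apply/eqP; move: (ge_U (t a)); rewrite (negbTE tail_a) submx0.
- have tail_a : t a = v.
    by case/orP: inc_a => /eqP // hav; move/forallP/(_ a): source_v; rewrite hav eqxx.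
  have head_a : h a != v by move/forallP: source_v.
  have le_U : subrep_le (fun w => if w == v then 0 else U w) U.
    by move=> w; case: eqP => _; rewrite ?submx_refl ?sub0mx.
  case: (minU _ (delete_source_subrep U v source_v subU) le_U) => [zero_off | ge_U].
  + by right; move: (zero_off (h a)); rewrite (negbTE head_a).
  + by left; apply/eqP; move: (ge_U (t a)); rewrite tail_a eqxx submx0.
Qed.

(* If every simple subrepresentation vanishes at an endpoint of a0, then a0
   acts by zero on any semisimple representation: each simple summand at
   t a0 lies in the kernel of x a0, and these summands span W. *)
Lemma semisimple_arrow_zero (a0 : A) :
  (forall U, simple_subrep h t x U -> U (t a0) = 0 \/ U (h a0) = 0) ->
  semisimple h t x -> x a0 = 0.
Proof.
move=> vanish [k [Us [simpleUs decomp]]].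
have [_ /andP[_ span_tail]] := decomp (t a0).
have summand_in_ker i : (Us i (t a0) <= kermx (x a0)^T)%MS.
  rewrite sub_kermx; have [subU _ _] := simpleUs i.
  case: (vanish _ (simpleUs i)) => zeroU; first by rewrite zeroU mul0mx.
  by rewrite -submx0 -zeroU subU.
have : (1%:M <= kermx (x a0)^T)%MS.
  by apply: submx_trans span_tail _; apply/sumsmx_subP => i _.
rewrite sub_kermx mul1mx => /eqP xT0.
by rewrite -[x a0]trmxK xT0 trmx0.
Qed.

End SimpleAtEnds.

Theorem corollary5p7 (C : numClosedFieldType) (V A : finType) (h t : A -> V)
    (n : nat) :
  (exists v : V, is_end h t v && incident h t v) ->
  (0 < n)%N ->
  ~ zariski_dense (fun x : A -> 'M[C]_n => semisimple h t x).
Proof.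
move=> [v /andP[end_v /existsP[a0 inc_a0]]] n_gt0 dense.
have ss_zero (x : A -> 'M[C]_n) : semisimple h t x -> x a0 = 0.
  by apply: semisimple_arrow_zero => U simpleU;
     apply: simple_vanishes_near_end simpleU end_v inc_a0.
pose i0 := Ordinal n_gt0.
have coord_vanishes (x : A -> 'M[C]_n) : semisimple h t x -> x a0 i0 i0 = 0.
  by move=> ss_x; rewrite (ss_zero x ss_x) mxE.
have := dense _ (pf_coord _ a0 i0 i0) coord_vanishes (fun _ => 1%:M).
by rewrite mxE eqxx /= => /eqP; rewrite GRing.oner_eq0.
Qed.
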